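(* If $\Sigma\subseteq\mathcal L$ is finite and closed under subformulas, then the canonical quasimodel $\mathfrak C/\Sigma$ is a $\Sigma$-quasimodel; in particular its relation $R^+$ is $\omega$-sensible.
   Context: $\mathcal L$: formulas with $\wedge,\vee,\Rightarrow,\Leftarrow,\mathsf X,\mathsf Y,\mathsf G,\mathsf H,\mathsf U,\mathsf S$; $\top:=p_0\Rightarrow p_0$, $\bot:=p_0\Leftarrow p_0$, $\neg\varphi:=\varphi\Rightarrow\bot$. $\mathsf{GTL}$ is the Hilbert calculus: substitution instances of intuitionistic tautologies; $\varphi\Rightarrow(\psi\vee(\varphi\Leftarrow\psi))$; $(\varphi\Rightarrow\psi)\vee(\psi\Rightarrow\varphi)$; $\neg((\varphi\Leftarrow\psi)\wedge(\psi\Leftarrow\varphi))$; $\neg\mathsf X\bot$, $\mathsf X(\varphi\vee\psi)\Rightarrow(\mathsf X\varphi\vee\mathsf X\psi)$, $(\mathsf X\varphi\wedge\mathsf X\psi)\Rightarrow\mathsf X(\varphi\wedge\psi)$, $\mathsf X(\varphi\Rightarrow\psi)\Leftrightarrow(\mathsf X\varphi\Rightarrow\mathsf X\psi)$, $\mathsf G(\varphi\Rightarrow\psi)\Rightarrow(\mathsf G\varphi\Rightarrow\mathsf G\psi)$, $\mathsf G(\varphi\Rightarrow\psi)\Rightarrow(\theta\,\mathsf U\,\varphi\Rightarrow\theta\,\mathsf U\,\psi)$, $\mathsf G(\varphi\Rightarrow\psi)\Rightarrow(\varphi\,\mathsf U\,\theta\Rightarrow\psi\,\mathsf U\,\theta)$,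 $\mathsf G\varphi\Rightarrow\varphi\wedge\mathsf X\mathsf G\varphi$, $\psi\vee(\varphi\wedge\mathsf X(\varphi\,\mathsf U\,\psi))\Rightarrow\varphi\,\mathsf U\,\psi$, $\mathsf G(\varphi\Rightarrow\mathsf X\varphi)\Rightarrow(\varphi\Rightarrow\mathsf G\varphi)$, $\mathsf G(\psi\wedge\mathsf X\varphi\Rightarrow\varphi)\Rightarrow(\psi\,\mathsf U\,\varphi\Rightarrow\varphi)$ and their past versions (with $\mathsf Y,\mathsf H,\mathsf S$); $\varphi\Leftrightarrow\mathsf X\mathsf Y\varphi$, $\varphi\Leftrightarrow\mathsf Y\mathsf X\varphi$; rules: from $\varphi\Rightarrow\psi$ infer $(\varphi\Leftarrow\theta)\Rightarrow(\psi\Leftarrow\theta)$; from $\varphi\Rightarrow\psi\vee\gamma$ infer $(\varphi\Leftarrow\psi)\Rightarrow\gamma$; modus ponens; necessitation for $\mathsf X,\mathsf Y,\mathsf G,\mathsf H$. $\Gamma\vdash\Delta$ iff $\bigwedge\Gamma'\Rightarrow\bigvee\Delta'\in\mathsf{GTL}$ for finite $\Gamma'\subseteq\Gamma,\Delta'\subseteq\Delta$. $\Sigma$-types, $\Sigma$-labelled spaces, convex/fully confluent/bi-serial/sensible relations, $\Sigma$-labelled systems: for subformula-closed $\Sigma$, a $\Sigma$-type is $\Phi\subseteq\Sigma$ with the Boolean closure conditions for $\wedge,\vee$, ($\varphi\Rightarrow\psi\in\Phi$ implies $\varphi\notin\Phi$ or $\psi\in\Phi$; $\psi\in\Phi$ implies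 $\varphi\Rightarrow\psi\in\Phi$), ($\varphi\Leftarrow\psi\in\Phi$ implies $\varphi\in\Phi$; $\varphi\in\Phi,\psi\notin\Phi$ imply $\varphi\Leftarrow\psi\in\Phi$). A $\Sigma$-labelled space is $(W,\le,\ell)$ with $(W,\le)$ a disjoint union of linear posets, $\ell$ into $\Sigma$-types, $w\le v\Rightarrow\ell(w)\supseteq\ell(v)$, $\Rightarrow$-formulas outside $\ell(w)$ witnessed at some $v\le w$ ($\varphi\in\ell(v),\psi\notin\ell(v)$), $\Leftarrow$-formulas in $\ell(w)$ witnessed at some $v\ge w$. A relation $R$ is convex (images/preimages of points convex), fully confluent (forth–down: $x\le x'Ry'\Rightarrow\exists y\,xRy\le y'$; forth–up: $x'\ge xRy\Rightarrow\exists y'\,x'Ry'\ge y$; back–down: $x'Ry'\ge y\Rightarrow\exists x\,x'\ge xRy$; back–up: $xRy\le y'\Rightarrow\exists x'\,x\le x'Ry'$), bi-serial, and sensible (for each $wRv$: $\mathsf X\varphi\in\ell(w)\iff\varphi\in\ell(v)$; $\mathsf Y\varphi\in\ell(v)\iff\varphi\in\ell(w)$; $\mathsf G\varphi\in\ell(w)\iff\varphi\in\ell(w)\wedge\mathsf G\varphi\in\ell(v)$; $\mathsf H\varphi\in\ell(v)\iff\varphi\in\ell(v)\wedge\mathsf H\varphi\in\ell(w)$; $\varphi\,\mathsf U\,\psi\in\ell(w)\iff\psi\in\ell(w)\vee(\varphi\in\ell(w)\wedge\varphi\,\mathsf U\,\psi\in\ell(v))$; $\varphi\,\mathsf S\,\psi\in\ell(v)\iff\psi\in\ell(v)\vee(\varphi\in\ell(v)\wedge\varphi\,\mathsf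 S\,\psi\in\ell(w))$, for formulas in $\Sigma$). Labelled system: labelled space plus such a relation. $\omega$-sensible: $\mathsf G\varphi\in\Sigma\setminus\ell(w)$ gives $v$ with $wR^nv$, $\varphi\notin\ell(v)$; $\mathsf H\varphi\in\Sigma\setminus\ell(w)$ gives $v$ with $vR^nw$, $\varphi\notin\ell(v)$; $\varphi\,\mathsf U\,\psi\in\ell(w)$ gives $v$ with $wR^nv$, $\psi\in\ell(v)$; $\varphi\,\mathsf S\,\psi\in\ell(w)$ gives $v$ with $vR^nw$, $\psi\in\ell(v)$ ($n\ge0$). A $\Sigma$-quasimodel is a $\Sigma$-labelled system with $\omega$-sensible relation. Canonical quasimodel: $\mathrm{Type}_\infty$ is the set of $\mathcal L$-types $\Phi$ with $\Phi\nvdash\mathcal L\setminus\Phi$; $\Phi\le\Psi$ iff $\Phi\supseteq\Psi$; $\ell(\Phi)=\Phi\cap\Sigma$; $S(\Phi)=\{\varphi:\mathsf X\varphi\in\Phi\}$. $\mathfrak C/\Sigma$ is the quotient: $L(\Phi)=\{\ell(\Psi):\Psi\le\Phi$ or $\Phi\le\Psi\}$; $\Phi\sim\Psi$ iff $\ell$ and $L$ agree; $[\Phi]\le[\Psi]$ iff $L(\Phi)=L(\Psi)$ and $\ell(\Phi)\supseteq\ell(\Psi)$; $\ell([\Phi])=\ell(\Phi)$; $R_0$ smallest with $[\Phi]R_0[S(\Phi)]$; $XR^+Y$ iff there are $X_1\le X\le X_2$, $Y_1\le Y\le Y_2$ with $X_2R_0Y_1$ and $X_1R_0Y_2$. *)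

From Stdlib Require Import List.
Import ListNotations.

Inductive form : Type :=
| Var : nat -> form
| And : form -> form -> form
| Or : form -> form -> form
| Imp : form -> form -> form
| Coimp : form -> form -> form    (* phi <= psi  (co-implication) *)
| Next : form -> form
| Prev : form -> form
| Glob : form -> form
| Hist : form -> form
| Until : form -> form -> form
| Since : form -> form -> form.

Definition Top : form := Imp (Var 0) (Var 0).
Definition Bot : form := Coimp (Var 0) (Var 0).
Definition Neg (f : form) : form := Imp f Bot.
Definition Iff (a b : form) : form := And (Imp a b) (Imp b a).

Inductive ipf : Type :=
| IVar : nat -> ipf
| IBot : ipf
| IAnd : ipf -> ipf -> ipf
| IOr : ipf -> ipf -> ipf
| IImp : ipf -> ipf -> ipf.

Fixpoint iforce {K : Type} (r : K -> K -> Prop) (V : nat -> K -> Prop)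
  (k : K) (a : ipf) : Prop :=
  match a with
  | IVar n => V n k
  | IBot => False
  | IAnd a b => iforce r V k a /\ iforce r V k b
  | IOr a b => iforce r V k a \/ iforce r V k b
  | IImp a b => forall k', r k k' -> iforce r V k' a -> iforce r V k' b
  end.

Definition int_taut (a : ipf) : Prop :=
  forall (K : Type) (r : K -> K -> Prop) (V : nat -> K -> Prop),
    (forall k, r k k) ->
    (forall x y z, r x y -> r y z -> r x z) ->
    (forall n x y, r x y -> V n x -> V n y) ->
    forall k, iforce r V k a.

Fixpoint isubst (s : nat -> form) (a : ipf) : form :=
  match a with
  | IVar n => s n
  | IBot => Bot
  | IAnd a b => And (isubst s a) (isubst s b)
  | IOr a b => Or (isubst s a) (isubst s b)
  | IImp a b => Imp (isubst s a) (isubst s b)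
  end.

(** * Temporal axioms, parametrised by (X,G,U); past versions use (Y,H,S). *)
Inductive tax (N : form -> form) (B : form -> form) (W : form -> form -> form)
  : form -> Prop :=
| tax_nbot : tax N B W (Neg (N Bot))
| tax_or : forall a b, tax N B W (Imp (N (Or a b)) (Or (N a) (N b)))
| tax_and : forall a b, tax N B W (Imp (And (N a) (N b)) (N (And a b)))
| tax_imp : forall a b, tax N B W (Iff (N (Imp a b)) (Imp (N a) (N b)))
| tax_K : forall a b, tax N B W (Imp (B (Imp a b)) (Imp (B a) (B b)))
| tax_WR : forall a b c, tax N B W (Imp (B (Imp a b)) (Imp (W c a) (W c b)))
| tax_WL : forall a b c, tax N B W (Imp (B (Imp a b)) (Imp (W a c) (W b c)))
| tax_Bfix : forall a, tax N B W (Imp (B a) (And a (N (B a))))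
| tax_Wfix : forall a b, tax N B W (Imp (Or b (And a (N (W a b)))) (W a b))
| tax_Bind : forall a, tax N B W (Imp (B (Imp a (N a))) (Imp a (B a)))
| tax_Wind : forall a b, tax N B W (Imp (B (Imp (And b (N a)) a)) (Imp (W b a) a)).

Inductive GTL : form -> Prop :=
| g_int : forall a s, int_taut a -> GTL (isubst s a)
| g_coimp1 : forall a b, GTL (Imp a (Or b (Coimp a b)))
| g_lin : forall a b, GTL (Or (Imp a b) (Imp b a))
| g_coimp2 : forall a b, GTL (Neg (And (Coimp a b) (Coimp b a)))
| g_fut : forall f, tax Next Glob Until f -> GTL f
| g_past : forall f, tax Prev Hist Since f -> GTL f
| g_XY : forall a, GTL (Iff a (Next (Prev a)))
| g_YX : forall a, GTL (Iff a (Prev (Next a)))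
| g_coimp_mono : forall a b c, GTL (Imp a b) -> GTL (Imp (Coimp a c) (Coimp b c))
| g_coimp_res : forall a b c, GTL (Imp a (Or b c)) -> GTL (Imp (Coimp a b) c)
| g_mp : forall a b, GTL (Imp a b) -> GTL a -> GTL b
| g_necX : forall a, GTL a -> GTL (Next a)
| g_necY : forall a, GTL a -> GTL (Prev a)
| g_necG : forall a, GTL a -> GTL (Glob a)
| g_necH : forall a, GTL a -> GTL (Hist a).

Definition bigAnd (l : list form) : form := fold_right And Top l.
Definition bigOr (l : list form) : form := fold_right Or Bot l.

Definition entails (G D : form -> Prop) : Prop :=
  exists G' D' : list form,
    (forall f, In f G' -> G f) /\ (forall f, In f D' -> D f) /\
    GTL (Imp (bigAnd G') (bigOr D')).

Definition finite_set (S : form -> Prop) : Prop :=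
  exists l : list form, forall f, S f <-> In f l.

Definition subform_closed (S : form -> Prop) : Prop :=
  forall f, S f ->
    match f with
    | Var _ => True
    | And a b | Or a b | Imp a b | Coimp a b | Until a b | Since a b => S a /\ S b
    | Next a | Prev a | Glob a | Hist a => S a
    end.

Definition is_type (Sg : form -> Prop) (P : form -> Prop) : Prop :=
  (forall f, P f -> Sg f) /\
  (forall a b, Sg (And a b) -> (P (And a b) <-> P a /\ P b)) /\
  (forall a b, Sg (Or a b) -> (P (Or a b) <-> P a \/ P b)) /\
  (forall a b, Sg (Imp a b) -> P (Imp a b) -> ~ P a \/ P b) /\
  (forall a b, Sg (Imp a b) -> P b -> P (Imp a b)) /\
  (forall a b, Sg (Coimp a b) -> P (Coimp a b) -> P a) /\
  (forall a b, Sg (Coimp a b) -> P a -> ~ P b -> P (Coimp a b)).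

Section Abstract.
Context {W : Type}.

Definition comparable (le : W -> W -> Prop) (x y : W) : Prop := le x y \/ le y x.

(** (W, le) is a disjoint union of linear posets: a partial order whose
    comparability relation is transitive (components are chains). *)
Definition disj_union_linear (le : W -> W -> Prop) : Prop :=
  (forall x, le x x) /\
  (forall x y, le x y -> le y x -> x = y) /\
  (forall x y z, le x y -> le y z -> le x z) /\
  (forall x y z, comparable le x y -> comparable le y z -> comparable le x z).

Definition labelled_space (Sg : form -> Prop) (le : W -> W -> Prop)
  (lab : W -> form -> Prop) : Prop :=
  disj_union_linear le /\
  (forall w, is_type Sg (lab w)) /\
  (forall w v, le w v -> forall f, lab v f -> lab w f) /\
  (forall w a b, Sg (Imp a b) -> ~ lab w (Imp a b) ->
      exists v, le v w /\ lab v a /\ ~ lab v b) /\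
  (forall w a b, lab w (Coimp a b) ->
      exists v, le w v /\ lab v a /\ ~ lab v b).

Definition convex_rel (le R : W -> W -> Prop) : Prop :=
  (forall w v1 u v2, R w v1 -> R w v2 -> le v1 u -> le u v2 -> R w u) /\
  (forall v w1 u w2, R w1 v -> R w2 v -> le w1 u -> le u w2 -> R u v).

Definition fully_confluent (le R : W -> W -> Prop) : Prop :=
  (forall x x' y', le x x' -> R x' y' -> exists y, R x y /\ le y y') /\
  (forall x x' y, le x x' -> R x y -> exists y', R x' y' /\ le y y') /\
  (forall x' y' y, R x' y' -> le y y' -> exists x, le x x' /\ R x y) /\
  (forall x y y', R x y -> le y y' -> exists x', le x x' /\ R x' y').

Definition bi_serial (R : W -> W -> Prop) : Prop :=
  forall w, (exists v, R w v) /\ (exists u, R u w).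

Definition sensible (Sg : form -> Prop) (lab : W -> form -> Prop)
  (R : W -> W -> Prop) : Prop :=
  forall w v, R w v ->
  (forall a, Sg (Next a) -> (lab w (Next a) <-> lab v a)) /\
  (forall a, Sg (Prev a) -> (lab v (Prev a) <-> lab w a)) /\
  (forall a, Sg (Glob a) -> (lab w (Glob a) <-> lab w a /\ lab v (Glob a))) /\
  (forall a, Sg (Hist a) -> (lab v (Hist a) <-> lab v a /\ lab w (Hist a))) /\
  (forall a b, Sg (Until a b) ->
     (lab w (Until a b) <-> lab w b \/ (lab w a /\ lab v (Until a b)))) /\
  (forall a b, Sg (Since a b) ->
     (lab v (Since a b) <-> lab v b \/ (lab v a /\ lab w (Since a b)))).

Fixpoint iter_rel (R : W -> W -> Prop) (n : nat) : W -> W -> Prop :=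
  match n with
  | O => fun x y => x = y
  | S n => fun x z => exists y, R x y /\ iter_rel R n y z
  end.

Definition omega_sensible (Sg : form -> Prop) (lab : W -> form -> Prop)
  (R : W -> W -> Prop) : Prop :=
  (forall w a, Sg (Glob a) -> ~ lab w (Glob a) ->
     exists n v, iter_rel R n w v /\ ~ lab v a) /\
  (forall w a, Sg (Hist a) -> ~ lab w (Hist a) ->
     exists n v, iter_rel R n v w /\ ~ lab v a) /\
  (forall w a b, lab w (Until a b) ->
     exists n v, iter_rel R n w v /\ lab v b) /\
  (forall w a b, lab w (Since a b) ->
     exists n v, iter_rel R n v w /\ lab v b).

Definition labelled_system (Sg : form -> Prop) (le : W -> W -> Prop)
  (lab : W -> form -> Prop) (R : W -> W -> Prop) : Prop :=
  labelled_space Sg le lab /\ convex_rel le R /\ fully_confluent le R /\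
  bi_serial R /\ sensible Sg lab R.

Definition quasimodel (Sg : form -> Prop) (le : W -> W -> Prop)
  (lab : W -> form -> Prop) (R : W -> W -> Prop) : Prop :=
  labelled_system Sg le lab R /\ omega_sensible Sg lab R.

End Abstract.

Definition all_forms : form -> Prop := fun _ => True.

Definition tinf (P : form -> Prop) : Prop :=
  is_type all_forms P /\ ~ entails P (fun f => ~ P f).

(** Phi <= Psi iff Phi contains Psi *)
Definition cle (P Q : form -> Prop) : Prop := forall f, Q f -> P f.

Definition clab (Sg : form -> Prop) (P : form -> Prop) : form -> Prop :=
  fun f => P f /\ Sg f.

Definition csucc (P : form -> Prop) : form -> Prop := fun f => P (Next f).

Definition seteq (A B : form -> Prop) : Prop := forall f, A f <-> B f.

Definition Lset (Sg : form -> Prop) (P : form -> Prop) : (form -> Prop) -> Prop :=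
  fun A => exists Q, tinf Q /\ (cle Q P \/ cle P Q) /\ seteq A (clab Sg Q).

Definition Lseteq (L1 L2 : (form -> Prop) -> Prop) : Prop :=
  forall A, L1 A <-> L2 A.

Definition csim (Sg : form -> Prop) (P Q : form -> Prop) : Prop :=
  seteq (clab Sg P) (clab Sg Q) /\ Lseteq (Lset Sg P) (Lset Sg Q).

Definition cls (Sg : form -> Prop) (P : form -> Prop) : (form -> Prop) -> Prop :=
  fun Q => tinf Q /\ csim Sg P Q.

Definition qpt (Sg : form -> Prop) : Type :=
  { C : (form -> Prop) -> Prop |
    exists P, tinf P /\ forall Q, C Q <-> cls Sg P Q }.

Definition qle (Sg : form -> Prop) (X Y : qpt Sg) : Prop :=
  exists P Q, proj1_sig X P /\ proj1_sig Y Q /\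
    Lseteq (Lset Sg P) (Lset Sg Q) /\ cle (clab Sg P) (clab Sg Q).

Definition qlab (Sg : form -> Prop) (X : qpt Sg) : form -> Prop :=
  fun f => Sg f /\ exists P, proj1_sig X P /\ P f.

Definition R0 (Sg : form -> Prop) (X Y : qpt Sg) : Prop :=
  exists P, proj1_sig X P /\ proj1_sig Y (csucc P).

Definition Rplus (Sg : form -> Prop) (X Y : qpt Sg) : Prop :=
  exists X1 X2 Y1 Y2,
    qle Sg X1 X /\ qle Sg X X2 /\ qle Sg Y1 Y /\ qle Sg Y Y2 /\
    R0 Sg X2 Y1 /\ R0 Sg X1 Y2.

From Stdlib Require Import List Classical Arith PeanoNat.
From Stdlib Require Import FunctionalExtensionality PropExtensionality ProofIrrelevance.
Import ListNotations.

(** R⁺ is studied for an abstract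
       "next" operator N: sensibility, convexity, forward confluence,
       seriality and ω-sensibility towards N.  As the converse of R⁺ for X is
       R⁺ for Y, the backward and past clauses are the same lemmas for N = Y.
    4. For finite Σ a ~-class is determined by finitely many formulas, so
       every set of points is described by a pair of formulas; fed to the
       induction axioms of G and U these yield ω-sensibility. *)

Lemma iforce_persistent {K} (r : K -> K -> Prop) V
  (Ht : forall x y z, r x y -> r y z -> r x z)
  (Hm : forall n x y, r x y -> V n x -> V n y) :
  forall a k k', r k k' -> iforce r V k a -> iforce r V k' a.
Proof.
  induction a; simpl; intros k k' Hk H; try tauto.
  - eauto.
  - destruct H; split; eauto.
  - destruct H; [left|right]; eauto.
  - intros k'' H1 H2. apply (H k''); eauto.
Qed.

Ltac taut :=
  let K := fresh "K" in let r := fresh "r" in let V := fresh "V" in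
  let Hr := fresh "Hr" in let Ht := fresh "Ht" in let Hm := fresh "Hm" in
  intros K r V Hr Ht Hm; simpl;
  pose proof (iforce_persistent r V Ht Hm) as HM; simpl in HM;
  repeat match goal with
  | |- forall _, _ => intro
  | |- _ /\ _ => split
  | H : _ /\ _ |- _ => destruct H
  | H : False |- _ => destruct H
  | H : _ \/ _ |- _ => destruct H
  end;
  eauto 7.

Definition lsubst (l : list form) : nat -> form := fun n => nth n l Bot.

Lemma gtl_taut (A : ipf) l : int_taut A -> GTL (isubst (lsubst l) A).
Proof. intros T. exact (g_int _ (lsubst l) T). Qed.
Lemma gtl_taut_mp (A B : ipf) l : int_taut (IImp A B) ->
  GTL (isubst (lsubst l) A) -> GTL (isubst (lsubst l) B).
Proof. intros T H. exact (g_mp _ _ (g_int _ (lsubst l) T) H). Qed.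
Lemma gtl_taut_mp2 (A B C : ipf) l : int_taut (IImp A (IImp B C)) ->
  GTL (isubst (lsubst l) A) -> GTL (isubst (lsubst l) B) -> GTL (isubst (lsubst l) C).
Proof. intros T H1 H2. exact (g_mp _ _ (g_mp _ _ (g_int _ (lsubst l) T) H1) H2). Qed.

Notation v0 := (IVar 0). Notation v1 := (IVar 1). Notation v2 := (IVar 2).
Notation v3 := (IVar 3). Notation v4 := (IVar 4).

Lemma imp_trans a b c : GTL (Imp a b) -> GTL (Imp b c) -> GTL (Imp a c).
Proof. apply (gtl_taut_mp2 (IImp v0 v1) (IImp v1 v2) (IImp v0 v2) [a;b;c]). taut. Qed.
Lemma and_intro a b c : GTL (Imp a b) -> GTL (Imp a c) -> GTL (Imp a (And b c)).
Proof. apply (gtl_taut_mp2 (IImp v0 v1) (IImp v0 v2) (IImp v0 (IAnd v1 v2)) [a;b;c]). taut. Qed.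
Lemma or_elim a b c : GTL (Imp a c) -> GTL (Imp b c) -> GTL (Imp (Or a b) c).
Proof. apply (gtl_taut_mp2 (IImp v0 v2) (IImp v1 v2) (IImp (IOr v0 v1) v2) [a;b;c]). taut. Qed.
Lemma and_l a b : GTL (Imp (And a b) a).
Proof. apply (gtl_taut (IImp (IAnd v0 v1) v0) [a;b]). taut. Qed.
Lemma and_r a b : GTL (Imp (And a b) b).
Proof. apply (gtl_taut (IImp (IAnd v0 v1) v1) [a;b]). taut. Qed.
Lemma or_l a b : GTL (Imp a (Or a b)).
Proof. apply (gtl_taut (IImp v0 (IOr v0 v1)) [a;b]). taut. Qed.
Lemma or_r a b : GTL (Imp b (Or a b)).
Proof. apply (gtl_taut (IImp v1 (IOr v0 v1)) [a;b]). taut. Qed.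
Lemma imp_refl a : GTL (Imp a a).
Proof. apply (gtl_taut (IImp v0 v0) [a]). taut. Qed.
Lemma bot_elim a : GTL (Imp Bot a).
Proof. apply (gtl_taut (IImp IBot v0) [a]). taut. Qed.
Lemma imp_weaken a b : GTL b -> GTL (Imp a b).
Proof. apply (gtl_taut_mp v1 (IImp v0 v1) [a;b]). taut. Qed.
Lemma imp_curry a b c : GTL (Imp (And a b) c) -> GTL (Imp a (Imp b c)).
Proof. apply (gtl_taut_mp (IImp (IAnd v0 v1) v2) (IImp v0 (IImp v1 v2)) [a;b;c]). taut. Qed.
Lemma imp_apply a b : GTL (Imp (And a (Imp a b)) b).
Proof. apply (gtl_taut (IImp (IAnd v0 (IImp v0 v1)) v1) [a;b]). taut. Qed.
Lemma imp_const a b : GTL (Imp b (Imp a b)).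
Proof. apply (gtl_taut (IImp v1 (IImp v0 v1)) [a;b]). taut. Qed.
Lemma and_mono a b c d : GTL (Imp a b) -> GTL (Imp c d) -> GTL (Imp (And a c) (And b d)).
Proof. apply (gtl_taut_mp2 (IImp v0 v1) (IImp v2 v3) (IImp (IAnd v0 v2) (IAnd v1 v3)) [a;b;c;d]). taut. Qed.
Lemma or_mono a b c d : GTL (Imp a b) -> GTL (Imp c d) -> GTL (Imp (Or a c) (Or b d)).
Proof. apply (gtl_taut_mp2 (IImp v0 v1) (IImp v2 v3) (IImp (IOr v0 v2) (IOr v1 v3)) [a;b;c;d]). taut. Qed.
Lemma or_assoc a b c : GTL (Imp (Or (Or a b) c) (Or a (Or b c))).
Proof. apply (gtl_taut (IImp (IOr (IOr v0 v1) v2) (IOr v0 (IOr v1 v2))) [a;b;c]). taut. Qed.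
Lemma and_assoc a b c : GTL (Imp (And a (And b c)) (And (And a b) c)).
Proof. apply (gtl_taut (IImp (IAnd v0 (IAnd v1 v2)) (IAnd (IAnd v0 v1) v2)) [a;b;c]). taut. Qed.
Lemma and_comm a b : GTL (Imp (And a b) (And b a)).
Proof. apply (gtl_taut (IImp (IAnd v0 v1) (IAnd v1 v0)) [a;b]). taut. Qed.
Lemma iff_l a b : GTL (Iff a b) -> GTL (Imp a b).
Proof. intro H. exact (g_mp _ _ (and_l _ _) H). Qed.
Lemma iff_r a b : GTL (Iff a b) -> GTL (Imp b a).
Proof. intro H. exact (g_mp _ _ (and_r _ _) H). Qed.

(** Cut on a formula [f]: the propositional core of the cut rule for ⊢. *)
Lemma imp_cut f x d y e : GTL (Imp (And f x) d) -> GTL (Imp y (Or f e)) ->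
  GTL (Imp (And x y) (Or d e)).
Proof.
  apply (gtl_taut_mp2 (IImp (IAnd v0 v1) v2) (IImp v3 (IOr v0 v4))
           (IImp (IAnd v1 v3) (IOr v2 v4)) [f;x;d;y;e]).
  taut. destruct (H2 k'1 H3 H5); [left; apply H0; eauto | right; auto].
Qed.

Lemma coimp_elim a b : GTL (Imp (Coimp a b) a).
Proof. apply g_coimp_res. apply or_r. Qed.

Section TemporalLaws.
Variables (N B : form -> form) (W : form -> form -> form).
Hypothesis tax_sound : forall f, tax N B W f -> GTL f.
Hypothesis nec_N : forall a, GTL a -> GTL (N a).
Hypothesis nec_B : forall a, GTL a -> GTL (B a).

Lemma N_mono a b : GTL (Imp a b) -> GTL (Imp (N a) (N b)).
Proof. intro H. apply (g_mp _ _ (iff_l _ _ (tax_sound _ (tax_imp _ _ _ a b))) (nec_N _ H)). Qed.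
Lemma B_mono a b : GTL (Imp a b) -> GTL (Imp (B a) (B b)).
Proof. intro H. apply (g_mp _ _ (tax_sound _ (tax_K _ _ _ a b)) (nec_B _ H)). Qed.
Lemma B_elim a : GTL (Imp (B a) a).
Proof. eapply imp_trans. apply tax_sound, tax_Bfix. apply and_l. Qed.
Lemma B_step a : GTL (Imp (B a) (N (B a))).
Proof. eapply imp_trans. apply tax_sound, tax_Bfix. apply and_r. Qed.

Lemma B_ind p q : GTL (Imp p (N p)) -> GTL (Imp p q) -> GTL (Imp p (B q)).
Proof.
  intros H1 H2. eapply imp_trans.
  - apply (g_mp _ _ (tax_sound _ (tax_Bind _ _ _ p)) (nec_B _ H1)).
  - apply B_mono, H2.
Qed.

Lemma B_fold a : GTL (Imp (And a (N (B a))) (B a)).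
Proof.
  apply B_ind.
  - eapply imp_trans. apply and_r. apply N_mono. apply tax_sound, tax_Bfix.
  - apply and_l.
Qed.

Lemma W_now a b : GTL (Imp b (W a b)).
Proof. eapply imp_trans. apply or_l. apply tax_sound, tax_Wfix. Qed.
Lemma W_later a b : GTL (Imp (And a (N (W a b))) (W a b)).
Proof. eapply imp_trans. apply or_r. apply tax_sound, tax_Wfix. Qed.

Lemma W_ind a b th : GTL (Imp b th) -> GTL (Imp (And a (N th)) th) -> GTL (Imp (W a b) th).
Proof.
  intros H1 H2. eapply imp_trans.
  - apply (g_mp _ _ (tax_sound _ (tax_WR _ _ _ b th a)) (nec_B _ H1)).
  - apply (g_mp _ _ (tax_sound _ (tax_Wind _ _ _ th a)) (nec_B _ H2)).
Qed.

Lemma W_unfold a b : GTL (Imp (W a b) (Or b (And a (N (W a b))))).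
Proof.
  apply W_ind.
  - apply or_l.
  - eapply imp_trans; [|apply or_r]. apply and_mono. apply imp_refl.
    apply N_mono. apply tax_sound, tax_Wfix.
Qed.
End TemporalLaws.

Definition consistent (P : form -> Prop) : Prop := ~ entails P (fun f => ~ P f).

Lemma entails_mono (G D G2 D2 : form -> Prop) :
  (forall f, G f -> G2 f) -> (forall f, D f -> D2 f) -> entails G D -> entails G2 D2.
Proof. intros h1 h2 [G' [D' [a [b c]]]]. exists G', D'. repeat split; auto. Qed.

Section Consistent.
Variable P : form -> Prop.
Hypothesis HP : consistent P.

Lemma cons_derive G f : (forall g, In g G -> P g) -> GTL (Imp (bigAnd G) f) -> P f.
Proof.
  intros H1 H2. apply NNPP; intro Hf. apply HP. exists G, [f]. repeat split; auto.
  - intros g [<-|[]]; auto.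
  - simpl. eapply imp_trans. apply H2. apply or_l.
Qed.
Lemma cons_mp1 a f : P a -> GTL (Imp a f) -> P f.
Proof.
  intros H1 H2. apply (cons_derive [a]). intros g [<-|[]]; auto.
  simpl. eapply imp_trans. apply and_l. apply H2.
Qed.
Lemma cons_mp2 a b f : P a -> P b -> GTL (Imp (And a b) f) -> P f.
Proof.
  intros H1 H2 H3. apply (cons_derive [a;b]). intros g [<-|[<-|[]]]; auto.
  simpl. eapply imp_trans; [|apply H3]. apply and_mono. apply imp_refl. apply and_l.
Qed.
Lemma cons_theorem f : GTL f -> P f.
Proof. intro H. apply (cons_derive []). simpl; tauto. apply imp_weaken, H. Qed.
Lemma cons_no_bot : ~ P Bot.
Proof.
  intro H. apply HP. exists [Bot], []. repeat split.
  intros g [<-|[]]; auto. intros g []. simpl. apply and_l.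
Qed.
Lemma cons_prime a b : P (Or a b) -> P a \/ P b.
Proof.
  intro H. apply NNPP; intro Hn. apply HP. exists [Or a b], [a;b]. repeat split.
  - intros g [<-|[]]; auto.
  - intros g [<-|[<-|[]]]; tauto.
  - simpl. eapply imp_trans. apply and_l. apply or_mono. apply imp_refl. apply or_l.
Qed.
Lemma cons_coimp a b : P a -> ~ P b -> P (Coimp a b).
Proof.
  intros H1 H2. apply NNPP; intro Hn. apply HP. exists [a], [b; Coimp a b]. repeat split.
  - intros g [<-|[]]; auto.
  - intros g [<-|[<-|[]]]; tauto.
  - simpl. eapply imp_trans. apply and_l. eapply imp_trans. apply g_coimp1.
    apply or_mono. apply imp_refl. apply or_l.
Qed.
Lemma cons_mp a b : P a -> P (Imp a b) -> P b.
Proof. intros H1 H2. apply (cons_mp2 _ _ _ H1 H2). apply imp_apply. Qed.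

Lemma cons_is_type : is_type all_forms P.
Proof.
  refine (conj _ (conj _ (conj _ (conj _ (conj _ (conj _ _)))))).
  - intros; exact I.
  - intros a b _; split.
    + intro H; split; (eapply cons_mp1; [exact H|]). apply and_l. apply and_r.
    + intros [h1 h2]. apply (cons_mp2 a b); auto. apply imp_refl.
  - intros a b _; split. apply cons_prime.
    intros [h|h]. apply (cons_mp1 a); auto; apply or_l. apply (cons_mp1 b); auto; apply or_r.
  - intros a b _ H. destruct (classic (P a)); [right; eapply cons_mp; eauto | left; auto].
  - intros a b _ H. apply (cons_mp1 b); auto. apply imp_const.
  - intros a b _ H. apply (cons_mp1 (Coimp a b)); auto. apply coimp_elim.
  - intros a b _ H1 H2. apply cons_coimp; auto.
Qed.

Lemma cons_bigAnd l : P (bigAnd l) <-> forall g, In g l -> P g.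
Proof.
  induction l; simpl.
  - split. intros; tauto. intros; apply cons_theorem, imp_refl.
  - split.
    + intros H g [<-|Hg]. eapply cons_mp1; eauto; apply and_l.
      apply IHl; auto. eapply cons_mp1; eauto; apply and_r.
    + intros H. eapply cons_mp2. apply H; auto. apply IHl; auto. apply imp_refl.
Qed.
Lemma cons_bigOr l : P (bigOr l) <-> exists g, In g l /\ P g.
Proof.
  induction l; simpl.
  - split. intro H; destruct (cons_no_bot H). intros [g [[] _]].
  - split.
    + intro H. destruct (cons_prime _ _ H). eauto.
      destruct (proj1 IHl H0) as [g [? ?]]; eauto.
    + intros [g [[<-|Hg] Pg]]. eapply cons_mp1; eauto; apply or_l.
      eapply cons_mp1. apply IHl; eauto. apply or_r.
Qed.
End Consistent.

Lemma consistent_tinf P : consistent P -> tinf P.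
Proof. intro H. split; auto. apply cons_is_type; auto. Qed.

Section TypeClosure.
Variable P : form -> Prop.
Hypothesis HP : tinf P.
Lemma type_mp1 a f : P a -> GTL (Imp a f) -> P f.
Proof. apply cons_mp1, HP. Qed.
Lemma type_mp2 a b f : P a -> P b -> GTL (Imp (And a b) f) -> P f.
Proof. apply cons_mp2, HP. Qed.
Lemma type_theorem f : GTL f -> P f.
Proof. apply cons_theorem, HP. Qed.
Lemma type_prime a b : P (Or a b) -> P a \/ P b.
Proof. apply cons_prime, HP. Qed.
Lemma type_no_bot : ~ P Bot.
Proof. apply cons_no_bot, HP. Qed.
Lemma type_coimp a b : P a -> ~ P b -> P (Coimp a b).
Proof. apply cons_coimp, HP. Qed.
Lemma type_mp a b : P a -> P (Imp a b) -> P b.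
Proof. apply cons_mp, HP. Qed.
Lemma type_bigAnd l : P (bigAnd l) <-> forall g, In g l -> P g.
Proof. apply cons_bigAnd, HP. Qed.
Lemma type_bigOr l : P (bigOr l) <-> exists g, In g l /\ P g.
Proof. apply cons_bigOr, HP. Qed.
Lemma type_and a b : P (And a b) <-> P a /\ P b.
Proof.
  split.
  - intro h; split; [apply (type_mp1 _ _ h (and_l _ _)) | apply (type_mp1 _ _ h (and_r _ _))].
  - intros [h1 h2]; apply (type_mp2 _ _ _ h1 h2 (imp_refl _)).
Qed.
End TypeClosure.

(** * The Lindenbaum lemma *)

Definition add (G : form -> Prop) f : form -> Prop := fun h => G h \/ h = f.

Lemma bigAnd_split (G : form -> Prop) f L : (forall x, In x L -> G x \/ x = f) ->
  exists L1, (forall x, In x L1 -> G x) /\ GTL (Imp (And f (bigAnd L1)) (bigAnd L)).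
Proof.
  induction L as [|x L IH]; intro H.
  - exists []. split. intros _ []. simpl. apply imp_weaken, imp_refl.
  - destruct IH as [L1 [H1 H2]]. intros; apply H; simpl; auto.
    destruct (H x (or_introl eq_refl)) as [Gx| ->].
    + exists (x :: L1). split. intros y [<-|Hy]; auto. simpl. apply and_intro.
      * apply (gtl_taut (IImp (IAnd v0 (IAnd v1 v2)) v1) [f;x;bigAnd L1]). taut.
      * eapply imp_trans; [|apply H2].
        apply (gtl_taut (IImp (IAnd v0 (IAnd v1 v2)) (IAnd v0 v2)) [f;x;bigAnd L1]). taut.
    + exists L1. split; auto. simpl. apply and_intro. apply and_l. apply H2.
Qed.

Lemma bigOr_split (D : form -> Prop) f L : (forall x, In x L -> D x \/ x = f) ->
  exists L1, (forall x, In x L1 -> D x) /\ GTL (Imp (bigOr L) (Or f (bigOr L1))).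
Proof.
  induction L as [|x L IH]; intro H.
  - exists []. split. intros _ []. simpl. apply bot_elim.
  - destruct IH as [L1 [H1 H2]]. intros; apply H; simpl; auto.
    destruct (H x (or_introl eq_refl)) as [Dx| ->].
    + exists (x :: L1). split. intros y [<-|Hy]; auto. simpl. apply or_elim.
      * eapply imp_trans. apply or_l. apply or_r.
      * eapply imp_trans. apply H2. apply or_mono. apply imp_refl. apply or_r.
    + exists L1. split; auto. simpl. apply or_elim. apply or_l. apply H2.
Qed.

Lemma bigAnd_app L1 L2 : GTL (Imp (bigAnd (L1 ++ L2)) (And (bigAnd L1) (bigAnd L2))).
Proof.
  induction L1; simpl.
  - apply and_intro. apply imp_weaken, imp_refl. apply imp_refl.
  - eapply imp_trans. apply and_mono. apply imp_refl. apply IHL1. apply and_assoc.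
Qed.
Lemma bigOr_app L1 L2 : GTL (Imp (Or (bigOr L1) (bigOr L2)) (bigOr (L1 ++ L2))).
Proof.
  induction L1; simpl.
  - apply or_elim. apply bot_elim. apply imp_refl.
  - eapply imp_trans. apply or_assoc. apply or_mono. apply imp_refl. apply IHL1.
Qed.

Lemma entails_cut G D f : entails (add G f) D -> entails G (add D f) -> entails G D.
Proof.
  intros [G1 [D1 [h1 [h2 h3]]]] [G2 [D2 [k1 [k2 k3]]]].
  destruct (bigAnd_split G f G1 h1) as [L1 [l1 l2]].
  destruct (bigOr_split D f D2 k2) as [M1 [m1 m2]].
  exists (L1 ++ G2), (D1 ++ M1). repeat split.
  - intros x Hx. apply in_app_or in Hx. destruct Hx; auto.
  - intros x Hx. apply in_app_or in Hx. destruct Hx; auto.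
  - eapply imp_trans. apply bigAnd_app. eapply imp_trans; [|apply bigOr_app].
    apply (imp_cut f). eapply imp_trans. apply l2. apply h3.
    eapply imp_trans. apply k3. apply m2.
Qed.

(** An enumeration of all formulas by increasing finite lists. *)
Fixpoint flist (n : nat) : list form :=
  match n with
  | 0 => []
  | S m => let L := flist m in
      map Var (seq 0 n) ++ L ++
      flat_map (fun a => [Next a; Prev a; Glob a; Hist a]) L ++
      flat_map (fun a => flat_map (fun b =>
        [And a b; Or a b; Imp a b; Coimp a b; Until a b; Since a b]) L) L
  end.

Lemma flist_S m : flist (S m) = map Var (seq 0 (S m)) ++ flist m ++
  flat_map (fun a => [Next a; Prev a; Glob a; Hist a]) (flist m) ++
  flat_map (fun a => flat_map (fun b =>
    [And a b; Or a b; Imp a b; Coimp a b; Until a b; Since a b]) (flist m)) (flist m).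
Proof. reflexivity. Qed.

Lemma flist_mono m n f : m <= n -> In f (flist m) -> In f (flist n).
Proof.
  induction 1 as [|n _ IH]; auto. intro Hf. rewrite flist_S. apply in_or_app. right.
  apply in_or_app. left. auto.
Qed.

Lemma flist_complete f : exists n, In f (flist n).
Proof.
  induction f.
  1: { exists (S n). rewrite flist_S. apply in_or_app. left. apply in_map. apply in_seq. simpl. split; auto with arith. }
  all: try (destruct IHf as [m Hm]; exists (S m); rewrite flist_S;
    do 2 (apply in_or_app; right); apply in_or_app; left;
    apply in_flat_map; exists f; split; simpl; tauto).
  all: destruct IHf1 as [m1 H1]; destruct IHf2 as [m2 H2]; exists (S (max m1 m2));
    rewrite flist_S; do 3 (apply in_or_app; right); apply in_flat_map; exists f1;
    (split; [apply (flist_mono m1); auto; apply Nat.le_max_l|]);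
    apply in_flat_map; exists f2;
    (split; [apply (flist_mono m2); auto; apply Nat.le_max_r | simpl; tauto]).
Qed.

Definition step (p : (form -> Prop) * (form -> Prop)) (f : form) :=
  (fun g => fst p g \/ (g = f /\ ~ entails (add (fst p) f) (snd p)),
   fun g => snd p g \/ (g = f /\ entails (add (fst p) f) (snd p))).

Lemma step_ok p f : ~ entails (fst p) (snd p) -> ~ entails (fst (step p f)) (snd (step p f)).
Proof.
  intros H. destruct (classic (entails (add (fst p) f) (snd p))) as [E|E]; intro E2.
  - apply H. apply (entails_cut _ _ f E). revert E2.
    apply entails_mono; simpl; unfold add.
    + intros g [h|[_ h]]; tauto.
    + intros g [h|[-> _]]; auto.
  - apply E. revert E2. apply entails_mono; simpl; unfold add.
    + intros g [h|[-> _]]; auto.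
    + intros g [h|[_ h]]; tauto.
Qed.

Lemma fold_ok L : forall p, ~ entails (fst p) (snd p) ->
  ~ entails (fst (fold_left step L p)) (snd (fold_left step L p)).
Proof. induction L; simpl; intros; auto. apply IHL, step_ok; auto. Qed.
Lemma fold_mono L : forall p, (forall g, fst p g -> fst (fold_left step L p) g) /\
  (forall g, snd p g -> snd (fold_left step L p) g).
Proof.
  induction L; simpl; intros; auto.
  destruct (IHL (step p a)) as [k1 k2]. split; intros; [apply k1|apply k2]; simpl; auto.
Qed.
Lemma fold_decides L : forall p f, In f L ->
  fst (fold_left step L p) f \/ snd (fold_left step L p) f.
Proof.
  induction L; simpl; intros p f H. destruct H. destruct H as [<-|H]; auto.
  destruct (fold_mono L (step p a)) as [h1 h2]. simpl in h1, h2.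
  destruct (classic (entails (add (fst p) a) (snd p))); auto.
Qed.

Lemma common_stage (F : nat -> form -> Prop) (Hm : forall m n g, m <= n -> F m g -> F n g) L :
  (forall g, In g L -> exists n, F n g) -> exists N, forall g, In g L -> F N g.
Proof.
  induction L; intros H. exists 0; intros _ [].
  destruct IHL as [N HN]. intros; apply H; simpl; auto.
  destruct (H a (or_introl eq_refl)) as [n Hn]. exists (max N n).
  intros g [<-|Hg]. apply (Hm n); auto. apply Nat.le_max_r. apply (Hm N); auto. apply Nat.le_max_l.
Qed.

Section Lindenbaum.
Variables G0 D0 : form -> Prop.
Hypothesis G0_D0 : ~ entails G0 D0.

Fixpoint stage (n : nat) : (form -> Prop) * (form -> Prop) :=
  match n with
  | 0 => (G0, D0)
  | S m => fold_left step (flist m) (stage m)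
  end.

Lemma stage_ok n : ~ entails (fst (stage n)) (snd (stage n)).
Proof. induction n; simpl; auto. apply fold_ok; auto. Qed.
Lemma stage_mono m n : m <= n -> (forall g, fst (stage m) g -> fst (stage n) g) /\
  (forall g, snd (stage m) g -> snd (stage n) g).
Proof.
  induction 1. split; auto. destruct IHle. simpl.
  destruct (fold_mono (flist m0) (stage m0)). split; auto.
Qed.

Definition lim_left : form -> Prop := fun g => exists n, fst (stage n) g.
Definition lim_right : form -> Prop := fun g => exists n, snd (stage n) g.

Lemma lim_ok : ~ entails lim_left lim_right.
Proof.
  intros [G' [D' [h1 [h2 h3]]]].
  destruct (common_stage (fun n g => fst (stage n) g)
              (fun m n g H => proj1 (stage_mono m n H) g) G' h1) as [N1 HN1].
  destruct (common_stage (fun n g => snd (stage n) g)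
              (fun m n g H => proj2 (stage_mono m n H) g) D' h2) as [N2 HN2].
  apply (stage_ok (max N1 N2)). exists G', D'. repeat split; auto.
  - intros g Hg. apply (proj1 (stage_mono N1 _ (Nat.le_max_l _ _))); auto.
  - intros g Hg. apply (proj2 (stage_mono N2 _ (Nat.le_max_r _ _))); auto.
Qed.

Lemma lim_total g : lim_left g \/ lim_right g.
Proof.
  destruct (flist_complete g) as [m Hm].
  destruct (fold_decides (flist m) (stage m) g Hm); [left|right]; exists (S m); auto.
Qed.

Lemma lindenbaum : exists Psi, tinf Psi /\ (forall f, G0 f -> Psi f) /\ (forall f, D0 f -> ~ Psi f).
Proof.
  exists lim_left. split; [|split].
  - apply consistent_tinf. intro E. apply lim_ok. revert E. apply entails_mono; auto.
    intros g Hg. destruct (lim_total g); tauto.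
  - intros f Hf. exists 0; auto.
  - intros f Hf Hp. apply lim_ok. exists [f], [f]. repeat split.
    + intros g [<-|[]]; auto.
    + intros g [<-|[]]; exists 0; auto.
    + simpl. eapply imp_trans. apply and_l. apply or_l.
Qed.
End Lindenbaum.

Lemma bigOr_const D b : (forall x, In x D -> x = b) -> GTL (Imp (bigOr D) b).
Proof.
  induction D; simpl; intros H. apply bot_elim.
  apply or_elim. rewrite (H a); auto. apply imp_refl. apply IHD; auto.
Qed.
Lemma bigAnd_const G a : (forall x, In x G -> x = a) -> GTL (Imp a (bigAnd G)).
Proof.
  induction G; simpl; intros H. apply imp_weaken, imp_refl.
  apply and_intro. rewrite (H a0); auto. apply imp_refl. apply IHG; auto.
Qed.

Lemma imp_witness P a b : tinf P -> ~ P (Imp a b) -> exists Q, tinf Q /\ cle Q P /\ Q a /\ ~ Q b.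
Proof.
  intros HP Hn.
  destruct (lindenbaum (add P a) (fun g => g = b)) as [Q [h1 [h2 h3]]].
  - intros [G' [D' [k1 [k2 k3]]]]. destruct (bigAnd_split P a G' k1) as [L1 [l1 l2]].
    apply Hn. apply (cons_derive P (proj2 HP) L1); auto.
    apply imp_curry. eapply imp_trans. apply and_comm. eapply imp_trans. apply l2.
    eapply imp_trans. apply k3. apply bigOr_const; auto.
  - exists Q. refine (conj h1 (conj _ (conj _ _))).
    + intros f Hf; apply h2; left; auto.
    + apply h2; right; auto.
    + apply h3; auto.
Qed.

Lemma coimp_witness P a b : tinf P -> P (Coimp a b) -> exists Q, tinf Q /\ cle P Q /\ Q a /\ ~ Q b.
Proof.
  intros HP Hc.
  destruct (lindenbaum (fun g => g = a) (add (fun g => ~ P g) b)) as [Q [h1 [h2 h3]]].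
  - intros [G' [D' [k1 [k2 k3]]]]. destruct (bigOr_split _ b D' k2) as [M1 [m1 m2]].
    assert (Hm : P (bigOr M1)).
    { apply (type_mp1 P HP _ _ Hc). apply g_coimp_res.
      eapply imp_trans. apply bigAnd_const; eauto.
      eapply imp_trans. apply k3. apply m2. }
    destruct (proj1 (type_bigOr P HP M1) Hm) as [g [g1 g2]]. exact (m1 g g1 g2).
  - exists Q. refine (conj h1 (conj _ (conj _ _))).
    + intros f Hf. apply NNPP; intro Hn. apply (h3 f); auto. left; auto.
    + apply h2; auto.
    + apply h3; right; auto.
Qed.

Lemma type_completeness a b : (forall Q, tinf Q -> Q a -> Q b) -> GTL (Imp a b).
Proof.
  intro H. apply NNPP; intro Hn.
  destruct (lindenbaum (fun g => g = a) (fun g => g = b)) as [Q [h1 [h2 h3]]].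
  - intros [G' [D' [k1 [k2 k3]]]]. apply Hn. eapply imp_trans. apply bigAnd_const; eauto.
    eapply imp_trans. apply k3. apply bigOr_const; auto.
  - apply (h3 b eq_refl). apply H; auto.
Qed.

(** * Linearity: types comparable to a common type form chains *)
Definition comp (P Q : form -> Prop) : Prop := cle P Q \/ cle Q P.

(** Two types above a common type (subsets of it) are comparable,
    by the axiom ¬((a⇐b) ∧ (b⇐a)). *)
Lemma above_chain P Q R : tinf P -> tinf Q -> tinf R -> cle P Q -> cle P R -> comp Q R.
Proof.
  intros HP HQ HR h1 h2. apply NNPP; intro Hn. apply not_or_and in Hn as [n1 n2].
  apply not_all_ex_not in n1 as [b n1]. apply not_all_ex_not in n2 as [a n2].
  apply imply_to_and in n1 as [Rb Qb]. apply imply_to_and in n2 as [Qa Ra].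
  apply (type_no_bot P HP). apply (type_mp2 P HP (Coimp a b) (Coimp b a)).
  - apply h1. apply type_coimp; auto.
  - apply h2. apply type_coimp; auto.
  - apply g_coimp2.
Qed.

(** Two types below a common type (supersets of it) are comparable,
    by the axiom (a⇒b) ∨ (b⇒a). *)
Lemma below_chain P Q R : tinf P -> tinf Q -> tinf R -> cle Q P -> cle R P -> comp Q R.
Proof.
  intros HP HQ HR h1 h2. apply NNPP; intro Hn. apply not_or_and in Hn as [n1 n2].
  apply not_all_ex_not in n1 as [b n1]. apply not_all_ex_not in n2 as [a n2].
  apply imply_to_and in n1 as [Rb Qb]. apply imply_to_and in n2 as [Qa Ra].
  destruct (type_prime P HP _ _ (type_theorem P HP _ (g_lin a b))) as [H1|H1].
  - apply Qb. apply (type_mp Q HQ a); auto.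
  - apply Ra. apply (type_mp R HR b); auto.
Qed.

Lemma comp_trans P Q R : tinf P -> tinf Q -> tinf R -> comp P Q -> comp Q R -> comp P R.
Proof.
  unfold comp; intros HP HQ HR [h1|h1] [h2|h2].
  - left; intros f Hf; auto.
  - apply (below_chain Q); auto.
  - apply (above_chain Q); auto.
  - right; intros f Hf; auto.
Qed.

Definition succ (N : form -> form) (P : form -> Prop) : form -> Prop := fun f => P (N f).

Lemma succ_mono N P Q : cle P Q -> cle (succ N P) (succ N Q).
Proof. intros H f h. apply H, h. Qed.

Section Successor.
Variables (N B : form -> form) (W : form -> form -> form).
Hypothesis tax_sound : forall f, tax N B W f -> GTL f.
Hypothesis nec_N : forall a, GTL a -> GTL (N a).

(** The successor of a type is a type: N commutes with finite ∧ and ∨. *)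
Lemma succ_tinf P : tinf P -> tinf (succ N P).
Proof.
  intros HP. apply consistent_tinf. intros [G' [D' [k1 [k2 k3]]]].
  assert (HG : P (N (bigAnd G'))).
  { clear k2 k3. induction G'; simpl.
    - apply (type_theorem P HP), nec_N, imp_refl.
    - simpl in k1. apply (type_mp2 P HP (N a) (N (bigAnd G'))).
      + apply (k1 a); auto.
      + apply IHG'; intros f Hf; apply k1; auto.
      + apply tax_sound, tax_and. }
  assert (HD : P (N (bigOr D'))).
  { apply (type_mp1 P HP _ _ HG). apply (N_mono N B W tax_sound nec_N), k3. }
  clear k1 k3 HG. induction D'; simpl in HD.
  - apply (type_no_bot P HP). apply (type_mp1 P HP _ _ HD). apply tax_sound, tax_nbot.
  - destruct (type_prime P HP (N a) (N (bigOr D'))).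
    + apply (type_mp1 P HP _ _ HD). apply tax_sound, tax_or.
    + apply (k2 a); simpl; auto.
    + apply IHD'; auto. intros f Hf; apply k2; simpl; auto.
Qed.
End Successor.

Lemma pred_eq (P Q : form -> Prop) : (forall f, P f <-> Q f) -> P = Q.
Proof. intro H. extensionality f. apply propositional_extensionality. auto. Qed.

Lemma succ_inverse N M P : (forall a, GTL (Iff a (N (M a)))) -> tinf P ->
  succ M (succ N P) = P.
Proof.
  intros HNM HP. apply pred_eq. intro f. unfold succ. split; intro H.
  - apply (type_mp1 P HP _ _ H). apply iff_r, HNM.
  - apply (type_mp1 P HP _ _ H). apply iff_l, HNM.
Qed.

(** * Profiles: finitely many formulas pin down a type's behaviour on them *)

(** All partitions (T, C) of the list [t] into "true" and "false" parts. *)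
Fixpoint profiles (t : list form) : list (list form * list form) :=
  match t with
  | [] => [([], [])]
  | x :: t' => map (fun p => (x :: fst p, snd p)) (profiles t') ++
               map (fun p => (fst p, x :: snd p)) (profiles t')
  end.

(** In a type, [prof_coimp p] says that some type above realises [p], and
    [prof_imp p] that no type below realises it. *)
Definition prof_coimp (p : list form * list form) : form := Coimp (bigAnd (fst p)) (bigOr (snd p)).
Definition prof_imp (p : list form * list form) : form := Imp (bigAnd (fst p)) (bigOr (snd p)).

Lemma profiles_cover t T C : In (T, C) (profiles t) -> forall f, In f t -> In f T \/ In f C.
Proof.
  revert T C; induction t as [|x t IH]; simpl; intros T C H f Hf. destruct Hf.
  apply in_app_or in H. destruct H as [H|H]; apply in_map_iff in H as [[T' C'] [E H]];
  simpl in E; injection E; intros; subst; destruct Hf as [<-|Hf]; simpl; auto;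
  destruct (IH _ _ H f Hf); simpl; auto.
Qed.

Lemma profile_of t R : tinf R ->
  exists T C, In (T, C) (profiles t) /\ R (bigAnd T) /\ ~ R (bigOr C).
Proof.
  intro TR. assert (exists T C, In (T, C) (profiles t) /\
    (forall f, In f T -> R f) /\ (forall f, In f C -> ~ R f)) as [T [C [h1 [h2 h3]]]].
  { induction t as [|x t IH].
    - exists [], []. simpl. repeat split; auto; intros f [].
    - destruct IH as [T [C [h1 [h2 h3]]]]. destruct (classic (R x)).
      + exists (x :: T), C. split; [|split; auto; intros f [<-|hf]; auto].
        simpl. apply in_or_app. left. apply in_map_iff. exists (T, C); auto.
      + exists T, (x :: C). split; [|split; auto; intros f [<-|hf]; auto].
        simpl. apply in_or_app. right. apply in_map_iff. exists (T, C); auto. }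
  exists T, C. split; auto. split.
  - apply (type_bigAnd R TR); auto.
  - intro h. apply (type_bigOr R TR) in h as [g [g1 g2]]. exact (h3 g g1 g2).
Qed.

Lemma same_profile t T C R R' : In (T, C) (profiles t) -> tinf R -> tinf R' ->
  R (bigAnd T) -> ~ R (bigOr C) -> R' (bigAnd T) -> ~ R' (bigOr C) ->
  forall f, In f t -> (R f <-> R' f).
Proof.
  intros H TR TR' h1 h2 h3 h4 f Hf. destruct (profiles_cover t T C H f Hf) as [hT|hC].
  - split; intros _. apply (type_bigAnd R' TR' T); auto. apply (type_bigAnd R TR T); auto.
  - split; intro h; exfalso. apply h2, (type_bigOr R TR). eauto. apply h4, (type_bigOr R' TR'). eauto.
Qed.

Lemma list_filter_ex {A} (p : A -> Prop) (L : list A) :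
  exists L', forall x, In x L' <-> In x L /\ p x.
Proof.
  induction L as [|a L IH]. exists []. simpl; tauto.
  destruct IH as [L' H]. destruct (classic (p a)).
  - exists (a :: L'). intro x. simpl. rewrite H. split.
    intros [<-|[h1 h2]]; auto. intros [[<-|h1] h2]; auto.
  - exists L'. intro x. simpl. rewrite H. split.
    intros [h1 h2]; auto. intros [[<-|h1] h2]; [subst; tauto | auto].
Qed.

Lemma iter_snoc {T} (R : T -> T -> Prop) n x y z :
  iter_rel R n x y -> R y z -> iter_rel R (S n) x z.
Proof.
  revert x; induction n; simpl; intros x H1 H2. subst; exists z; auto.
  destruct H1 as [u [h1 h2]]. exists u; split; auto. apply (IHn u h2 H2).
Qed.

Lemma iter_rel_converse {T} (R R' : T -> T -> Prop) :
  (forall x y, R x y <-> R' y x) -> forall n x y, iter_rel R' n y x -> iter_rel R n x y.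
Proof.
  intros HR n. induction n as [|n IH]; simpl; intros x y H; auto.
  destruct H as [z [h1 h2]]. apply (iter_snoc R n x z y); auto. apply HR, h1.
Qed.

(** * The quotient C/Σ *)
Section Canonical.
Variable Sg : form -> Prop.

Definition mem (X : qpt Sg) (P : form -> Prop) : Prop := proj1_sig X P.

Lemma csim_sym P Q : csim Sg P Q -> csim Sg Q P.
Proof. intros [h1 h2]; split; intro x; [rewrite (h1 x)|rewrite (h2 x)]; tauto. Qed.
Lemma csim_trans P Q R : csim Sg P Q -> csim Sg Q R -> csim Sg P R.
Proof.
  intros [h1 h2] [k1 k2]; split; intro x; [rewrite (h1 x), (k1 x)|rewrite (h2 x), (k2 x)]; tauto.
Qed.

Lemma Lset_comp P P' : tinf P -> tinf P' -> comp P P' -> Lseteq (Lset Sg P) (Lset Sg P').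
Proof.
  intros HP HP' Hc A. split; intros [Q [HQ [Hq HA]]]; exists Q; split; auto; split; auto.
  - apply (comp_trans Q P P'); auto.
  - apply (comp_trans Q P' P); auto. destruct Hc; [right|left]; auto.
Qed.

Lemma Lset_self P : tinf P -> Lset Sg P (clab Sg P).
Proof. intro HP. exists P. split; auto. split. left; intros f h; auto. intro; tauto. Qed.

Lemma mem_some (X : qpt Sg) : exists P, mem X P.
Proof.
  destruct X as [C [P [HP HC]]]. exists P. unfold mem; simpl. apply HC.
  split; auto. split; intro; tauto.
Qed.
Lemma mem_tinf X P : mem X P -> tinf P.
Proof. destruct X as [C [R [HR HC]]]. unfold mem; simpl. intro H. apply HC in H. apply H. Qed.
Lemma mem_csim X P Q : mem X P -> mem X Q -> csim Sg P Q.
Proof.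
  destruct X as [C [R [HR HC]]]. unfold mem; simpl. intros H1 H2. apply HC in H1, H2.
  apply (csim_trans _ R). apply csim_sym, H1. apply H2.
Qed.
Lemma mem_ext X P Q : mem X P -> tinf Q -> csim Sg P Q -> mem X Q.
Proof.
  destruct X as [C [R [HR HC]]]. unfold mem; simpl. intros H1 H2 H3. apply HC in H1.
  apply HC. split; auto. apply (csim_trans _ P); apply H1 || auto.
Qed.

Lemma point_of P : tinf P -> exists X, mem X P.
Proof.
  intro HP. exists (exist _ (cls Sg P) (ex_intro _ P (conj HP (fun Q => iff_refl _)))).
  unfold mem; simpl. split; auto. split; intro; tauto.
Qed.

Lemma mem_inj X Y P : mem X P -> mem Y P -> X = Y.
Proof.
  intros H1 H2. destruct X as [C [R [HR HC]]]; destruct Y as [D [S [HS HD]]].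
  unfold mem in *; simpl in *.
  assert (C = D).
  { extensionality Q. apply propositional_extensionality. rewrite HC, HD.
    apply HC in H1; apply HD in H2. destruct H1 as [_ H1]; destruct H2 as [_ H2]. unfold cls.
    split; intros [h1 h2]; split; auto.
    - apply (csim_trans _ P). exact H2. apply (csim_trans _ R). apply csim_sym, H1. auto.
    - apply (csim_trans _ P). exact H1. apply (csim_trans _ S). apply csim_sym, H2. auto. }
  subst D. f_equal. apply proof_irrelevance.
Qed.

Lemma qlab_mem X P f : mem X P -> (qlab Sg X f <-> clab Sg P f).
Proof.
  intro H. unfold qlab, clab. split.
  - intros [h1 [Q [h2 h3]]]. destruct (mem_csim X Q P h2 H) as [k1 k2]. apply k1. split; auto.
  - intros [h1 h2]. split; auto. exists P; auto.
Qed.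
Lemma label_rep X P f : mem X P -> qlab Sg X f -> P f.
Proof. intros H h. apply (qlab_mem X P f H) in h. apply h. Qed.
Lemma rep_label X P f : mem X P -> P f -> Sg f -> qlab Sg X f.
Proof. intros H h s. apply (qlab_mem X P f H). split; auto. Qed.

Lemma qle_mem X Y P Q : mem X P -> mem Y Q ->
  (qle Sg X Y <-> Lseteq (Lset Sg P) (Lset Sg Q) /\ cle (clab Sg P) (clab Sg Q)).
Proof.
  intros HX HY. split.
  - intros [P' [Q' [h1 [h2 [h3 h4]]]]].
    destruct (mem_csim X P P' HX h1) as [a1 a2]. destruct (mem_csim Y Q Q' HY h2) as [b1 b2].
    split.
    + intro A. rewrite (a2 A), (h3 A), <- (b2 A). tauto.
    + intros f Hf. apply a1. apply h4. apply b1. auto.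
  - intros [h1 h2]. exists P, Q. auto.
Qed.

Lemma cle_qle X Y P Q : mem X P -> mem Y Q -> cle P Q -> qle Sg X Y.
Proof.
  intros HX HY H. apply (qle_mem X Y P Q HX HY). split.
  - apply Lset_comp. apply (mem_tinf X); auto. apply (mem_tinf Y); auto. left; auto.
  - intros f [h1 h2]; split; auto.
Qed.

Lemma rep_below X Z P : qle Sg X Z -> mem Z P -> exists Q, mem X Q /\ cle Q P.
Proof.
  intros Hle HP. destruct (mem_some X) as [R HR].
  destruct (proj1 (qle_mem X Z R P HR HP) Hle) as [hL hc].
  assert (TR := mem_tinf X R HR). assert (TP := mem_tinf Z P HP).
  destruct (proj1 (hL (clab Sg R)) (Lset_self R TR)) as [Q' [TQ' [[hc'|hc'] hs]]].
  - exists Q'. split; auto. apply (mem_ext X R); auto. split; auto.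
    intro A. rewrite (hL A). apply Lset_comp; auto. right; auto.
  - exists P. split; [|intros f h; auto]. apply (mem_ext X R); auto. split.
    + intro f. split; intro h. apply hs in h. destruct h as [h1 h2]. split; auto.
      apply hc; auto.
    + intro A. rewrite (hL A); tauto.
Qed.

Lemma rep_above X Z P : qle Sg Z X -> mem Z P -> exists Q, mem X Q /\ cle P Q.
Proof.
  intros Hle HP. destruct (mem_some X) as [R HR].
  destruct (proj1 (qle_mem Z X P R HP HR) Hle) as [hL hc].
  assert (TR := mem_tinf X R HR). assert (TP := mem_tinf Z P HP).
  destruct (proj2 (hL (clab Sg R)) (Lset_self R TR)) as [Q' [TQ' [[hc'|hc'] hs]]].
  - exists P. split; [|intros f h; auto]. apply (mem_ext X R); auto. split.
    + intro f. split; intro h. apply hc; auto. apply hs. destruct h as [h1 h2]. split; auto.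
    + intro A. rewrite (hL A); tauto.
  - exists Q'. split; auto. apply (mem_ext X R); auto. split; auto.
    intro A. rewrite <- (hL A). apply Lset_comp; auto. left; auto.
Qed.

Lemma qle_refl X : qle Sg X X.
Proof.
  destruct (mem_some X) as [P HP]. apply (qle_mem X X P P HP HP).
  split. intro; tauto. intros f h; auto.
Qed.

Lemma qle_trans X Y Z : qle Sg X Y -> qle Sg Y Z -> qle Sg X Z.
Proof.
  destruct (mem_some X) as [P HP]; destruct (mem_some Y) as [Q HQ]; destruct (mem_some Z) as [R HR].
  rewrite (qle_mem X Y P Q HP HQ), (qle_mem Y Z Q R HQ HR), (qle_mem X Z P R HP HR).
  intros [h1 h2] [k1 k2]. split. intro A; rewrite (h1 A); auto. intros f h; auto.
Qed.

Lemma label_mono X Y f : qle Sg X Y -> qlab Sg Y f -> qlab Sg X f.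
Proof.
  intros H h. destruct (mem_some X) as [P HP]; destruct (mem_some Y) as [Q HQ].
  apply (qle_mem X Y P Q HP HQ) in H. apply (qlab_mem Y Q f HQ) in h.
  apply (qlab_mem X P f HP). apply H; auto.
Qed.

Lemma comparable_iff_L X Y P Q : mem X P -> mem Y Q ->
  (comparable (qle Sg) X Y <-> Lseteq (Lset Sg P) (Lset Sg Q)).
Proof.
  intros HX HY. split.
  - intros [h|h]; intro A.
    + apply (qle_mem X Y P Q HX HY) in h. apply h.
    + apply (qle_mem Y X Q P HY HX) in h. symmetry. apply h.
  - intro hL. assert (TP := mem_tinf _ _ HX). assert (TQ := mem_tinf _ _ HY).
    destruct (proj2 (hL (clab Sg Q)) (Lset_self Q TQ)) as [Q' [TQ' [[hc|hc] hs]]].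
    + right. apply (qle_mem Y X Q P HY HX). split.
      * intro A; rewrite (hL A); tauto.
      * intros f h. apply hs. destruct h; split; auto.
    + left. apply (qle_mem X Y P Q HX HY). split; auto.
      intros f h. apply hs in h. destruct h; split; auto.
Qed.

Lemma qle_linear_components : disj_union_linear (qle Sg).
Proof.
  split; [apply qle_refl | split; [|split; [apply qle_trans|]]].
  - intros X Y h1 h2. destruct (mem_some X) as [P HP]; destruct (mem_some Y) as [Q HQ].
    apply (qle_mem X Y P Q HP HQ) in h1. apply (qle_mem Y X Q P HQ HP) in h2.
    apply (mem_inj X Y P HP). apply (mem_ext Y Q); auto. apply (mem_tinf _ _ HP).
    split; [|apply h2]. intro f; split; intro h; [apply (proj2 h1) | apply (proj2 h2)]; auto.
  - intros X Y Z h1 h2.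
    destruct (mem_some X) as [P HP]; destruct (mem_some Y) as [Q HQ]; destruct (mem_some Z) as [R HR].
    apply (comparable_iff_L X Y P Q HP HQ) in h1. apply (comparable_iff_L Y Z Q R HQ HR) in h2.
    apply (comparable_iff_L X Z P R HP HR). intro A. rewrite (h1 A); auto.
Qed.

Hypothesis Hsub : subform_closed Sg.

Lemma clab_type P : tinf P -> is_type Sg (clab Sg P).
Proof.
  intros [[_ [hA [hO [hI1 [hI2 [hC1 hC2]]]]]] _]. unfold clab.
  refine (conj _ (conj _ (conj _ (conj _ (conj _ (conj _ _)))))).
  - intros f [_ h]; auto.
  - intros a b H. pose proof (Hsub _ H) as [s1 s2]. rewrite (hA a b I). tauto.
  - intros a b H. pose proof (Hsub _ H) as [s1 s2]. rewrite (hO a b I). tauto.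
  - intros a b H [h1 _]. pose proof (Hsub _ H) as [s1 s2]. destruct (hI1 a b I h1); tauto.
  - intros a b H [h1 _]. split; auto. apply (hI2 a b I h1).
  - intros a b H [h1 _]. pose proof (Hsub _ H) as [s1 s2]. split; auto. apply (hC1 a b I h1).
  - intros a b H [h1 _] h2. pose proof (Hsub _ H) as [s1 s2]. split; auto.
    apply hC2; [exact I|auto|]. intro hb; apply h2; split; auto.
Qed.

Lemma canonical_labelled_space : labelled_space Sg (qle Sg) (qlab Sg).
Proof.
  split; [apply qle_linear_components | split; [|split; [|split]]].
  - intro w. destruct (mem_some w) as [P HP].
    replace (qlab Sg w) with (clab Sg P) by (symmetry; apply pred_eq; intro f; apply qlab_mem, HP).
    apply clab_type, (mem_tinf _ _ HP).
  - intros w v H f Hf. apply (label_mono w v f H Hf).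
  - intros w a b HS Hn. destruct (mem_some w) as [P HP]. pose proof (Hsub _ HS) as [s1 s2].
    destruct (imp_witness P a b (mem_tinf _ _ HP)) as [Q [TQ [hc [ha hb]]]].
    { intro h. apply Hn, (rep_label w P); auto. }
    destruct (point_of Q TQ) as [v Hv]. exists v.
    split; [apply (cle_qle v w Q P Hv HP hc)|]. split.
    + apply (rep_label v Q); auto.
    + intro h. apply hb, (label_rep v); auto.
  - intros w a b H. destruct (mem_some w) as [P HP].
    destruct (proj1 (qlab_mem w P _ HP) H) as [H' HS]. pose proof (Hsub _ HS) as [s1 s2].
    destruct (coimp_witness P a b (mem_tinf _ _ HP) H') as [Q [TQ [hc [ha hb]]]].
    destruct (point_of Q TQ) as [v Hv]. exists v.
    split; [apply (cle_qle w v P Q HP Hv hc)|]. split.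
    + apply (rep_label v Q); auto.
    + intro h. apply hb, (label_rep v); auto.
Qed.

(** ** For finite Σ, finitely many formulas determine a ~-class *)
Section Finite.
Variable l : list form.
Hypothesis Hl : forall f, Sg f <-> In f l.

Definition determining : list form :=
  l ++ flat_map (fun p => [prof_coimp p; prof_imp p]) (profiles l).

(** Types agreeing on [determining] see the same labels of comparable types:
    a comparable type is found again on the same side by a ⇒/⇐ witness. *)
Lemma Lset_transfer Th Th' A : tinf Th -> tinf Th' ->
  (forall f, In f determining -> (Th f <-> Th' f)) -> Lset Sg Th A -> Lset Sg Th' A.
Proof.
  intros T T' Hs [R [TR [hc hs]]].
  destruct (profile_of l R TR) as [s [r [k1 [k2 k3]]]].
  assert (Hin : forall g, In g [prof_coimp (s, r); prof_imp (s, r)] -> In g determining).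
  { intros g Hg. apply in_or_app. right. apply in_flat_map. exists (s, r). auto. }
  assert (Hfin : forall R', tinf R' -> R' (bigAnd s) -> ~ R' (bigOr r) -> seteq A (clab Sg R')).
  { intros R' TR' j1 j2 f. rewrite (hs f). unfold clab. split; intros [h1 h2]; split; auto;
    rewrite Hl in h2; [rewrite <- (same_profile l s r R R') | rewrite (same_profile l s r R R')]; auto. }
  destruct hc as [hc|hc].
  - assert (HI : ~ Th' (prof_imp (s, r))).
    { rewrite <- Hs by (apply Hin; simpl; auto). intro h. apply k3.
      apply (type_mp R TR (bigAnd s)); auto. }
    destruct (imp_witness Th' _ _ T' HI) as [R' [TR' [j1 [j2 j3]]]].
    exists R'. refine (conj TR' (conj _ _)). left; exact j1. apply Hfin; auto.
  - assert (HC : Th' (prof_coimp (s, r))).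
    { rewrite <- Hs by (apply Hin; simpl; auto). apply hc. apply (type_coimp R TR); auto. }
    destruct (coimp_witness Th' _ _ T' HC) as [R' [TR' [j1 [j2 j3]]]].
    exists R'. refine (conj TR' (conj _ _)). right; exact j1. apply Hfin; auto.
Qed.

Lemma agree_csim Th Th' : tinf Th -> tinf Th' ->
  (forall f, In f determining -> (Th f <-> Th' f)) -> csim Sg Th Th'.
Proof.
  intros T T' Hs. split.
  - intro f. unfold clab. split; intros [h1 h2]; split; auto; [rewrite <- Hs|rewrite Hs]; auto;
      apply in_or_app; left; apply Hl; auto.
  - intro A. split; apply Lset_transfer; auto. intros f hf; symmetry; auto.
Qed.

(** Every set [D] of points is described by two formulas: [psi] holds exactly in
    the types below a representative of a point of [D], and [th] fails exactly
    in the types above one.  They are the disjunction of [prof_coimp p] and the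
    conjunction of [prof_imp p] over the profiles [p] realised in [D]. *)
Lemma point_set_formulas (D : qpt Sg -> Prop) : exists psi th,
  (forall P, tinf P -> P psi -> exists X Q, D X /\ mem X Q /\ cle P Q) /\
  (forall X Q, D X -> mem X Q -> Q psi) /\
  (forall P, tinf P -> ~ P th -> exists X Q, D X /\ mem X Q /\ cle Q P) /\
  (forall X Q, D X -> mem X Q -> ~ Q th).
Proof.
  destruct (list_filter_ex (fun p => exists X Q, D X /\ mem X Q /\
      Q (bigAnd (fst p)) /\ ~ Q (bigOr (snd p))) (profiles determining)) as [Ts HTs].
  assert (found : forall p P, In p Ts -> tinf P -> P (bigAnd (fst p)) -> ~ P (bigOr (snd p)) ->
            exists X, D X /\ mem X P).
  { intros [T C] P Hp TP h1 h2. apply HTs in Hp as [Hp [X [Q [HX [HQ [d1 d2]]]]]].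
    assert (TQ := mem_tinf _ _ HQ).
    exists X. split; auto. apply (mem_ext X Q); auto. apply agree_csim; auto.
    apply (same_profile determining T C); auto. }
  assert (realised : forall X Q, D X -> mem X Q ->
            exists p, In p Ts /\ Q (bigAnd (fst p)) /\ ~ Q (bigOr (snd p))).
  { intros X Q HX HQ. destruct (profile_of determining Q (mem_tinf _ _ HQ)) as [T [C [k1 [k2 k3]]]].
    exists (T, C). split; auto. apply HTs. split; auto. exists X, Q; auto. }
  exists (bigOr (map prof_coimp Ts)), (bigAnd (map prof_imp Ts)).
  split; [|split; [|split]].
  - intros P TP H. apply (type_bigOr P TP) in H as [g [g1 g2]].
    apply in_map_iff in g1 as [p [<- g1]].
    destruct (coimp_witness P _ _ TP g2) as [Q [TQ [j1 [j2 j3]]]].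
    destruct (found p Q g1 TQ j2 j3) as [X [HX HQ]]. exists X, Q; auto.
  - intros X Q HX HQ. destruct (realised X Q HX HQ) as [p [k1 [k2 k3]]].
    apply (type_bigOr Q (mem_tinf _ _ HQ)). exists (prof_coimp p). split.
    + apply in_map; auto.
    + apply (type_coimp Q (mem_tinf _ _ HQ)); auto.
  - intros P TP H. assert (exists g, In g (map prof_imp Ts) /\ ~ P g) as [g [g1 g2]].
    { apply NNPP; intro Hn. apply H, (type_bigAnd P TP). intros g hg.
      apply NNPP; intro hn. apply Hn; eauto. }
    apply in_map_iff in g1 as [p [<- g1]].
    destruct (imp_witness P _ _ TP g2) as [Q [TQ [j1 [j2 j3]]]].
    destruct (found p Q g1 TQ j2 j3) as [X [HX HQ]]. exists X, Q; auto.
  - intros X Q HX HQ H. destruct (realised X Q HX HQ) as [p [k1 [k2 k3]]].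
    apply k3. apply (type_mp Q (mem_tinf _ _ HQ) (bigAnd (fst p))); auto.
    apply (proj1 (type_bigAnd Q (mem_tinf _ _ HQ) _) H (prof_imp p)). apply in_map; auto.
Qed.
End Finite.

(** ** The relation R⁺ for an abstract next-operator N *)

Definition R0g (N : form -> form) (X Y : qpt Sg) : Prop :=
  exists P, mem X P /\ mem Y (succ N P).

(** R⁺ built from [R0g N]; for N = X this is [Rplus Sg]. *)
Definition Rplusg (N : form -> form) (X Y : qpt Sg) : Prop :=
  exists X1 X2 Y1 Y2, qle Sg X1 X /\ qle Sg X X2 /\ qle Sg Y1 Y /\ qle Sg Y Y2 /\
    R0g N X2 Y1 /\ R0g N X1 Y2.

(** Convexity only uses the shape of R⁺. *)
Lemma Rplus_convex N w v1 u v2 :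
  Rplusg N w v1 -> Rplusg N w v2 -> qle Sg v1 u -> qle Sg u v2 -> Rplusg N w u.
Proof.
  intros [X1a [X2a [Y1a [Y2a [a1 [a2 [a3 [a4 [a5 a6]]]]]]]]]
    [X1b [X2b [Y1b [Y2b [b1 [b2 [b3 [b4 [b5 b6]]]]]]]]] h1 h2.
  exists X1b, X2a, Y1a, Y2b. repeat split; auto.
  - apply (qle_trans _ v1); auto.
  - apply (qle_trans _ v2); auto.
Qed.

Section Direction.
Variables (N B : form -> form) (W : form -> form -> form).
Hypothesis tax_sound : forall f, tax N B W f -> GTL f.
Hypothesis nec_N : forall a, GTL a -> GTL (N a).
Hypothesis nec_B : forall a, GTL a -> GTL (B a).
Hypothesis sub_N : forall a, Sg (N a) -> Sg a.
Hypothesis sub_B : forall a, Sg (B a) -> Sg a.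
Hypothesis sub_W : forall a b, Sg (W a b) -> Sg a /\ Sg b.

Lemma succ_point P : tinf P -> exists Y, mem Y (succ N P).
Proof. intro HP. apply point_of, (succ_tinf N B W tax_sound nec_N), HP. Qed.

Lemma R0_Rplus X P Y : mem X P -> mem Y (succ N P) -> Rplusg N X Y.
Proof. intros HX HY. exists X, X, Y, Y. repeat split; try apply qle_refl; exists P; auto. Qed.

Lemma Rplus_serial w : exists v, Rplusg N w v.
Proof.
  destruct (mem_some w) as [P HP]. destruct (succ_point P (mem_tinf _ _ HP)) as [v Hv].
  exists v. apply (R0_Rplus w P); auto.
Qed.

Lemma Rplus_forth_down x x' y' : qle Sg x x' -> Rplusg N x' y' -> exists y, Rplusg N x y /\ qle Sg y y'.
Proof.
  intros hx [X1 [X2 [Y1 [Y2 [_ [a2 [a3 [_ [[P2 [p1 p2]] _]]]]]]]]].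
  destruct (rep_below x X2 P2 (qle_trans _ _ _ hx a2) p1) as [Q [q1 q2]].
  destruct (succ_point Q (mem_tinf _ _ q1)) as [y hy]. exists y. split.
  - apply (R0_Rplus x Q); auto.
  - apply (qle_trans _ Y1); auto. apply (cle_qle y Y1 (succ N Q) (succ N P2)); auto.
    apply succ_mono; auto.
Qed.

Lemma Rplus_forth_up x x' y : qle Sg x x' -> Rplusg N x y -> exists y', Rplusg N x' y' /\ qle Sg y y'.
Proof.
  intros hx [X1 [X2 [Y1 [Y2 [a1 [_ [_ [a4 [_ [P1 [p1 p2]]]]]]]]]]].
  destruct (rep_above x' X1 P1 (qle_trans _ _ _ a1 hx) p1) as [Q [q1 q2]].
  destruct (succ_point Q (mem_tinf _ _ q1)) as [y' hy]. exists y'. split.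
  - apply (R0_Rplus x' Q); auto.
  - apply (qle_trans _ Y2); auto. apply (cle_qle Y2 y' (succ N P1) (succ N Q)); auto.
    apply succ_mono; auto.
Qed.

Lemma Rplus_announcing_rep w v : Rplusg N w v ->
  exists Q, mem w Q /\ forall f, qlab Sg v f -> Q (N f).
Proof.
  intros [X1 [X2 [Y1 [Y2 [_ [a2 [a3 [_ [[P2 [p1 p2]] _]]]]]]]]].
  destruct (rep_below w X2 P2 a2 p1) as [Q [q1 q2]]. exists Q. split; auto.
  intros f h. apply q2. apply (label_rep Y1 _ f p2), (label_mono Y1 v f a3 h).
Qed.

Lemma Rplus_announced_rep w v : Rplusg N w v ->
  exists Q, mem w Q /\ forall f, Sg f -> Q (N f) -> qlab Sg v f.
Proof.
  intros [X1 [X2 [Y1 [Y2 [a1 [_ [_ [a4 [_ [P1 [p1 p2]]]]]]]]]]].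
  destruct (rep_above w X1 P1 a1 p1) as [Q [q1 q2]]. exists Q. split; auto.
  intros f hS h. apply (label_mono v Y2 f a4), (rep_label Y2 _ f p2); auto. apply q2, h.
Qed.

Lemma sensible_next w v a : Rplusg N w v -> Sg (N a) -> (qlab Sg w (N a) <-> qlab Sg v a).
Proof.
  intros Hr HS. split; intro h.
  - destruct (Rplus_announced_rep w v Hr) as [Q [HQ HQv]].
    apply HQv; auto. apply (label_rep w Q _ HQ h).
  - destruct (Rplus_announcing_rep w v Hr) as [Q [HQ HQv]].
    apply (rep_label w Q); auto.
Qed.

Lemma sensible_box w v a : Rplusg N w v -> Sg (B a) ->
  (qlab Sg w (B a) <-> qlab Sg w a /\ qlab Sg v (B a)).
Proof.
  intros Hr HS. split.
  - intro h. destruct (Rplus_announced_rep w v Hr) as [Q [HQ HQv]].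
    assert (TQ := mem_tinf _ _ HQ). assert (hB := label_rep w Q _ HQ h). split.
    + apply (rep_label w Q); auto. apply (type_mp1 Q TQ _ _ hB), (B_elim N B W tax_sound).
    + apply HQv; auto. apply (type_mp1 Q TQ _ _ hB), (B_step N B W tax_sound).
  - intros [h1 h2]. destruct (Rplus_announcing_rep w v Hr) as [Q [HQ HQv]].
    apply (rep_label w Q); auto. apply (type_mp2 Q (mem_tinf _ _ HQ) a (N (B a))).
    + apply (label_rep w Q _ HQ h1).
    + apply HQv, h2.
    + apply (B_fold N B W tax_sound nec_N nec_B).
Qed.

Lemma sensible_until w v a b : Rplusg N w v -> Sg (W a b) ->
  (qlab Sg w (W a b) <-> qlab Sg w b \/ (qlab Sg w a /\ qlab Sg v (W a b))).
Proof.
  intros Hr HS. destruct (sub_W a b HS) as [sa sb]. split.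
  - intro h. destruct (Rplus_announced_rep w v Hr) as [Q [HQ HQv]].
    assert (TQ := mem_tinf _ _ HQ).
    destruct (type_prime Q TQ _ _ (type_mp1 Q TQ _ _ (label_rep w Q _ HQ h)
                (W_unfold N B W tax_sound nec_N nec_B a b))) as [hb|hab].
    + left. apply (rep_label w Q); auto.
    + apply (type_and Q TQ) in hab as [ha hn]. right. split.
      * apply (rep_label w Q); auto.
      * apply HQv; auto.
  - destruct (Rplus_announcing_rep w v Hr) as [Q [HQ HQv]]. assert (TQ := mem_tinf _ _ HQ).
    intro h. apply (rep_label w Q); auto. destruct h as [h|[h1 h2]].
    + apply (type_mp1 Q TQ b); [apply (label_rep w Q _ HQ h) | apply (W_now N B W tax_sound)].
    + apply (type_mp2 Q TQ a (N (W a b))).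
      * apply (label_rep w Q _ HQ h1).
      * apply HQv, h2.
      * apply (W_later N B W tax_sound).
Qed.

Variable l : list form.
Hypothesis Hl : forall f, Sg f <-> In f l.

Lemma reachable_step n w X Q : iter_rel (Rplusg N) n w X -> mem X Q ->
  exists Y, iter_rel (Rplusg N) (S n) w Y /\ mem Y (succ N Q).
Proof.
  intros Hn HQ. destruct (succ_point Q (mem_tinf _ _ HQ)) as [Y HY].
  exists Y. split; auto. apply (iter_snoc _ n w X Y); auto. apply (R0_Rplus X Q); auto.
Qed.

(** If every reachable point satisfies [a], the formula describing the reachable
    points is N-invariant and implies [a], so it implies [B a] (induction for B). *)
Lemma omega_box w a : Sg (B a) -> ~ qlab Sg w (B a) ->
  exists n v, iter_rel (Rplusg N) n w v /\ ~ qlab Sg v a.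
Proof.
  intros HS Hn. apply NNPP; intro Hno.
  set (D := fun X => exists n, iter_rel (Rplusg N) n w X).
  assert (Da : forall X, D X -> qlab Sg X a).
  { intros X [n hn]. apply NNPP; intro h. apply Hno; eauto. }
  destruct (point_set_formulas l Hl D) as [psi [th [below [inD _]]]].
  assert (psi_a : GTL (Imp psi a)).
  { apply type_completeness. intros P TP h. destruct (below P TP h) as [X [Q [HX [HQ hc]]]].
    apply hc, (label_rep X Q _ HQ (Da X HX)). }
  assert (psi_step : GTL (Imp psi (N psi))).
  { apply type_completeness. intros P TP h. destruct (below P TP h) as [X [Q [[n HX] [HQ hc]]]].
    destruct (reachable_step n w X Q HX HQ) as [Y [HY HYQ]].
    apply (succ_mono N _ _ hc). apply (inD Y); auto. exists (S n); auto. }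
  destruct (mem_some w) as [P HP]. apply Hn, (rep_label w P); auto.
  apply (type_mp1 P (mem_tinf _ _ HP) psi).
  - apply (inD w); auto. exists 0; simpl; auto.
  - apply (B_ind N B W tax_sound nec_B); auto.
Qed.

(** If no reachable point satisfies [b], the formula whose failure describes the
    reachable points is closed under [b] and [a ∧ N _]; induction for W refutes
    [W a b] at [w]. *)
Lemma omega_until w a b : qlab Sg w (W a b) ->
  exists n v, iter_rel (Rplusg N) n w v /\ qlab Sg v b.
Proof.
  intros Hu. apply NNPP; intro Hno.
  destruct (sub_W a b (proj1 Hu)) as [_ sb].
  set (D := fun X => exists n, iter_rel (Rplusg N) n w X).
  destruct (point_set_formulas l Hl D) as [psi [th [_ [_ [above outD]]]]].
  assert (b_th : GTL (Imp b th)).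
  { apply type_completeness. intros P TP h. apply NNPP; intro hn.
    destruct (above P TP hn) as [X [Q [[n HX] [HQ hc]]]].
    apply Hno. exists n, X. split; auto. apply (rep_label X Q); auto. }
  assert (step_th : GTL (Imp (And a (N th)) th)).
  { apply type_completeness. intros P TP h. apply NNPP; intro hn.
    destruct (above P TP hn) as [X [Q [[n HX] [HQ hc]]]].
    destruct (reachable_step n w X Q HX HQ) as [Y [HY HYQ]].
    apply (outD Y (succ N Q)); auto. exists (S n); auto.
    apply hc. apply (type_and P TP) in h. apply h. }
  destruct (mem_some w) as [P HP]. assert (TP := mem_tinf _ _ HP).
  apply (outD w P); auto. exists 0; simpl; auto.
  apply (type_mp1 P TP (W a b)). apply (label_rep w P _ HP Hu).
  apply (W_ind N B W tax_sound nec_B); auto.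
Qed.
End Direction.

Lemma R0_converse X Y : R0g Next X Y <-> R0g Prev Y X.
Proof.
  split.
  - intros [P [hX hY]]. exists (succ Next P). split; auto.
    rewrite (succ_inverse Next Prev P g_XY (mem_tinf _ _ hX)). exact hX.
  - intros [Q [hY hX]]. exists (succ Prev Q). split; auto.
    rewrite (succ_inverse Prev Next Q g_YX (mem_tinf _ _ hY)). exact hY.
Qed.

(** The converse of R⁺ is R⁺ for Y, since X and Y are mutually inverse. *)
Lemma Rplus_converse X Y : Rplus Sg X Y <-> Rplusg Prev Y X.
Proof.
  split; intros [A1 [A2 [B1 [B2 [h1 [h2 [h3 [h4 [h5 h6]]]]]]]]];
    exists B1, B2, A1, A2; repeat split; auto; apply R0_converse; auto.
Qed.

Lemma canonical_convex : convex_rel (qle Sg) (Rplus Sg).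
Proof.
  split.
  - apply (Rplus_convex Next).
  - intros v w1 u w2 h1 h2 h3 h4. apply Rplus_converse.
    apply (Rplus_convex Prev v w1 u w2); auto; apply Rplus_converse; auto.
Qed.

Lemma canonical_confluent : fully_confluent (qle Sg) (Rplus Sg).
Proof.
  split; [|split; [|split]].
  - apply (Rplus_forth_down Next Glob Until g_fut g_necX).
  - apply (Rplus_forth_up Next Glob Until g_fut g_necX).
  - intros x' y' y h hy. apply Rplus_converse in h.
    destruct (Rplus_forth_down Prev Hist Since g_past g_necY y y' x' hy h) as [x [hx1 hx2]].
    exists x. split; auto. apply Rplus_converse; auto.
  - intros x y y' h hy. apply Rplus_converse in h.
    destruct (Rplus_forth_up Prev Hist Since g_past g_necY y y' x hy h) as [x' [hx1 hx2]].
    exists x'. split; auto. apply Rplus_converse; auto.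
Qed.

Lemma canonical_bi_serial : bi_serial (Rplus Sg).
Proof.
  intro w. split.
  - apply (Rplus_serial Next Glob Until g_fut g_necX).
  - destruct (Rplus_serial Prev Hist Since g_past g_necY w) as [u hu].
    exists u. apply Rplus_converse; auto.
Qed.

Lemma canonical_sensible : sensible Sg (qlab Sg) (Rplus Sg).
Proof.
  intros w v H. assert (H' := proj1 (Rplus_converse w v) H).
  split; [|split; [|split; [|split; [|split]]]]; intros.
  - apply (sensible_next Next (fun a => Hsub (Next a))); auto.
  - apply (sensible_next Prev (fun a => Hsub (Prev a))); auto.
  - apply (sensible_box Next Glob Until g_fut g_necX g_necG (fun a => Hsub (Glob a))); auto.
  - apply (sensible_box Prev Hist Since g_past g_necY g_necH (fun a => Hsub (Hist a))); auto.
  - apply (sensible_until Next Glob Until g_fut g_necX g_necG (fun a b => Hsub (Until a b))); auto.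
  - apply (sensible_until Prev Hist Since g_past g_necY g_necH (fun a b => Hsub (Since a b))); auto.
Qed.

Lemma canonical_omega_sensible l : (forall f, Sg f <-> In f l) ->
  omega_sensible Sg (qlab Sg) (Rplus Sg).
Proof.
  intro Hl.
  assert (back : forall n v w, iter_rel (Rplusg Prev) n w v -> iter_rel (Rplus Sg) n v w).
  { apply iter_rel_converse, Rplus_converse. }
  split; [|split; [|split]].
  - apply (omega_box Next Glob Until g_fut g_necX g_necG l Hl).
  - intros w a HS Hn.
    destruct (omega_box Prev Hist Since g_past g_necY g_necH l Hl w a HS Hn) as [n [v [h1 h2]]].
    exists n, v. split; auto.
  - apply (omega_until Next Glob Until g_fut g_necX g_necG (fun a b => Hsub (Until a b)) l Hl).
  - intros w a b Hu.
    destruct (omega_until Prev Hist Since g_past g_necY g_necH (fun a b => Hsub (Since a b)) l Hl w a b Hu)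
      as [n [v [h1 h2]]].
    exists n, v. split; auto.
Qed.
End Canonical.

Theorem corollary10p3 :
  forall Sg : form -> Prop,
    finite_set Sg -> subform_closed Sg ->
    quasimodel Sg (qle Sg) (qlab Sg) (Rplus Sg).
Proof.
  intros Sg [l Hl] Hsub. split.
  - split; [apply canonical_labelled_space; auto|].
    split; [apply canonical_convex|].
    split; [apply canonical_confluent|].
    split; [apply canonical_bi_serial|].
    apply canonical_sensible; auto.
  - apply (canonical_omega_sensible Sg Hsub l Hl).
Qed.
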